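(* Let $n\ge4$ be even. For each $1\le j\le n-1$, the map $\nu_j:Y_1\to Y_j$, $x\mapsto\sigma_jx\sigma_j^{-1}$, is an order-preserving one-to-one mapping (with respect to the Bruhat order of $\mathcal F_n$ restricted to $Y_1$ and $Y_j$).
   Context: $s_i=(i,i+1)$; permutations compose right to left. $\mathcal F_m$ is the set of fixed-point-free involutions in $S_m$ with conjugation action, height $\ell/2$, and Bruhat order the weakest partial order with $z\le tzt$ for transpositions $t$ with $\ell(z)\le\ell(tzt)$. Regard $\mathcal F_{n-2}\subset S_n$; $w_0$ longest element of $S_n$; $Y_1=\{w_0zs_{n-1}w_0:z\in\mathcal F_{n-2}\}$; $\sigma_j=s_js_{j-1}\cdots s_1$; $Y_j=\sigma_jY_1\sigma_j^{-1}$. *)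

From mathcomp Require Import all_boot all_fingroup.
Unset Printing Implicit Defensive.

Local Open Scope group_scope.

(* The paper's points 1..n are the ordinals 0..n-1 of 'I_n.
   MathComp multiplies permutations left-to-right ((p * q) x = q (p x)),
   so the paper's right-to-left product a b is the MathComp product b * a,
   and the paper's conjugate x |-> g x g^-1 is MathComp's x ^ g = g^-1 * x * g. *)

(* simple transposition s_i = (i, i+1), paper indexing 1 <= i <= n-1
   (0-indexed: swaps i-1 and i); identity for out-of-range i *)
Definition s (n i : nat) : 'S_n :=
  match (insub i.-1 : option 'I_n), (insub i : option 'I_n) with
  | Some a, Some b => tperm a b
  | _, _ => 1
  end.

Definition w0 (n : nat) : 'S_n := perm (@rev_ord_inj n).

(* sigma_j = s_j s_{j-1} ... s_1 (right to left) = s_1 * s_2 * ... * s_j in MathComp *)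
Definition sigma (n j : nat) : 'S_n := \prod_(1 <= i < j.+1) s n i.

Definition len (n : nat) (z : 'S_n) : nat :=
  #|[set p : 'I_n * 'I_n | (p.1 < p.2)%N && (z p.2 < z p.1)%N]|.

Definition FPF (n : nat) : {set 'S_n} :=
  [set z : 'S_n | [forall i, z (z i) == i] && [forall i, z i != i]].

(* F_{n-2} regarded inside S_n: fpf involutions of the first n-2 points,
   fixing the last two points n-1, n *)
Definition Fsub (n : nat) : {set 'S_n} :=
  [set z : 'S_n | [forall i, z (z i) == i] &&
     [forall i : 'I_n, if (i < n - 2)%N then z i != i else z i == i]].

(* Y_1 = { w0 z s_{n-1} w0 : z in F_{n-2} } *)
Definition Y1 (n : nat) : {set 'S_n} :=
  [set w0 n * s n n.-1 * z * w0 n | z in Fsub n].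

Definition Y (n j : nat) : {set 'S_n} := [set x ^ sigma n j | x in Y1 n].

Definition nu (n j : nat) (x : 'S_n) : 'S_n := x ^ sigma n j.

Definition bruhat_step (n : nat) : rel 'S_n := fun z z' =>
  [&& z \in FPF n,
      [exists a : 'I_n, exists b : 'I_n,
         (a != b) && (z' == tperm a b * z * tperm a b)]
    & (len n z <= len n z')%N].

Definition bruhat (n : nat) : rel 'S_n := connect (bruhat_step n).

From mathcomp Require Import all_boot all_fingroup zify.

(* Elements of Y_1 are fixed-point-free involutions pairing the first two
   points.  Conjugation by sigma_j carries that pair to {1, j+1} and is
   increasing on the remaining points, so counting inversions shows that it
   raises the length of every such involution by exactly 2(j-1); hence nu_j
   maps Bruhat steps between such involutions to Bruhat steps.  A Bruhat chain
   ending in Y_1 never leaves them: if z pairs 1 with x and 2 with y, the only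
   conjugates t z t by a transposition that pair 1 with 2 uncross these pairs
   into {1,2}, {x,y}, which strictly lowers the length. *)

Set Implicit Arguments.
Unset Strict Implicit.

Section SumSplit.
Variable I : finType.

Lemma sum_split_seq (s : seq I) (F : I -> nat) : uniq s ->
  \sum_i F i = \sum_(i <- s) F i + \sum_(i | i \notin s) F i.
Proof. by move=> s_uniq; rewrite (bigID (mem s)) big_uniq. Qed.

Lemma sum2_split_seq (s : seq I) (F : I -> I -> nat) : uniq s ->
  \sum_p \sum_q F p q =
    \sum_(p <- s) \sum_(q <- s) F p q
  + \sum_(k | k \notin s) \sum_(p <- s) (F p k + F k p)
  + \sum_(p | p \notin s) \sum_(q | q \notin s) F p q.
Proof.
move=> s_uniq; rewrite (sum_split_seq _ s_uniq).
under eq_bigr do rewrite (sum_split_seq (F _) s_uniq).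
under [in X in _ + X]eq_bigr do rewrite (sum_split_seq (F _) s_uniq).
rewrite !big_split /= [\sum_(i <- s) \sum_(j | _) _]exchange_big.
under [X in _ = _ + X + _]eq_bigr do rewrite big_split.
rewrite big_split /=; lia.
Qed.

End SumSplit.

Lemma sum_ord_lt m J : \sum_(i < m) (i < J : nat) = minn m J.
Proof.
elim: m => [|m IHm]; first by rewrite big_ord0 min0n.
by rewrite big_ord_recr /= IHm; case: ltnP; lia.
Qed.

Section Inversions.
Variable n : nat.
Implicit Types (u g z : 'S_n) (p q : 'I_n).

Lemma len_sum z : len n z = \sum_(p : 'I_n) \sum_(q : 'I_n) ((p < q) && (z q < z p) : nat).
Proof.
rewrite /len -sum1dep_card big_mkcond /= pair_big /=.
by apply: eq_bigr => -[p q] _ /=; case: ifP.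
Qed.

Lemma len_conjg u g :
  len n (u ^ g)%g = \sum_(p : 'I_n) \sum_(q : 'I_n) ((g p < g q) && (g (u q) < g (u p)) : nat).
Proof.
rewrite len_sum (reindex_inj (@perm_inj _ g)); apply: eq_bigr => p _.
by rewrite (reindex_inj (@perm_inj _ g)); apply: eq_bigr => q _; rewrite !permJ.
Qed.

Lemma sum_perm_lt g (J : nat) : J <= n -> \sum_(p : 'I_n) (g p < J : nat) = J.
Proof.
move=> leJn; rewrite (reindex_inj (@perm_inj _ g^-1)) /=.
under eq_bigr do rewrite permKV.
by rewrite sum_ord_lt; apply/minn_idPr.
Qed.

End Inversions.

Section SimpleTranspositions.
Variable n : nat.
Implicit Type x : 'I_n.

Lemma s_nat i x : 0 < i < n ->
  s n i x = (if x == i.-1 :> nat then i else if x == i :> nat then i.-1 else x) :> nat.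
Proof.
move=> i_range; rewrite /s.
case: insubP => [a _ val_a|]; last by move=> /negP; case; lia.
case: insubP => [b _ val_b|]; last by move=> /negP; case; lia.
case: tpermP => [->|->|/eqP x_a /eqP x_b].
- by rewrite val_a val_b eqxx.
- by rewrite val_a val_b eqxx; case: eqP; lia.
- by rewrite -val_a -val_b !(inj_eq val_inj) (negPf x_a) (negPf x_b).
Qed.

Lemma sigma_nat j x : j < n ->
  sigma n j x = (if x == 0 :> nat then j else if x <= j then x.-1 else x) :> nat.
Proof.
elim: j => [|j IHj] ltjn.
  by rewrite /sigma big_geq // perm1; do !case: ifP; lia.
rewrite /sigma big_nat_recr //= -/(sigma n j) permM s_nat; last by lia.
move: (IHj (ltnW ltjn)); move: (nat_of_ord (sigma n j x)) (nat_of_ord x) => y z ->.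
by do !case: ifP; lia.
Qed.

End SimpleTranspositions.

Lemma perm_notin (T : finType) (u : {perm T}) (s : seq T) k :
  uniq s -> all (fun x => u x \in s) s -> k \notin s -> u k \notin s.
Proof.
move=> s_uniq /allP s_stable k_out.
have sub_s : {subset map u s <= s} by move=> _ /mapP [x s_x ->]; apply: s_stable.
have us_uniq : uniq (map u s) by rewrite (map_inj_uniq (@perm_inj _ u)).
have [_ eq_s] := uniq_min_size us_uniq sub_s
  (eq_leq (esym (size_map _ _))).
by rewrite -eq_s (mem_map (@perm_inj _ u)).
Qed.

Lemma FPFP n (a : 'S_n) :
  reflect ((forall i, a (a i) = i) /\ (forall i, a i != i)) (a \in FPF n).
Proof.
rewrite inE; apply: (iffP andP) => [[/forallP a_inv /forallP a_fpf]|[a_inv a_fpf]].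
  by split=> // i; apply/eqP.
by split; apply/forallP => i; rewrite ?a_inv.
Qed.

Lemma FPF_conjg n (u g : 'S_n) : u \in FPF n -> (u ^ g)%g \in FPF n.
Proof.
move=> /FPFP [u_inv u_fpf]; apply/FPFP; split=> k; rewrite -(permKV g k) !permJ.
  by rewrite u_inv.
by rewrite (inj_eq (@perm_inj _ g)).
Qed.

Lemma w0_nat n (k : 'I_n) : w0 n k = n - k.+1 :> nat.
Proof. by rewrite /w0 permE. Qed.

Lemma w0V n : (w0 n)^-1%g = w0 n.
Proof.
apply/permP => k; apply: (@perm_inj _ (w0 n)); rewrite permKV; apply: val_inj.
by rewrite /= !w0_nat; have := ltn_ord k; lia.
Qed.

Section Fsub.
Variable n : nat.
Hypothesis n_gt1 : 1 < n.
Local Notation sl := (s n n.-1).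

Lemma sl_nat (k : 'I_n) :
  sl k = (if k == n - 2 :> nat then n - 1 else if k == n - 1 :> nat then n - 2 else k) :> nat.
Proof. by rewrite s_nat; [do !case: eqP; lia | lia]. Qed.

Lemma Fsub_fix z (k : 'I_n) : z \in Fsub n -> ~~ (k < n - 2) -> z k = k.
Proof. by rewrite inE => /andP [_ /forallP /(_ k)] /[swap] /negPf -> /eqP. Qed.

Lemma Fsub_sl_FPF z : z \in Fsub n -> (sl * z)%g \in FPF n.
Proof.
move=> z_Fsub; have z_high (k : 'I_n) := @Fsub_fix z k z_Fsub.
move: z_Fsub; rewrite inE => /andP [/forallP z_inv /forallP z_supp].
have z_low (k : 'I_n) : k < n - 2 -> z k != k by move: (z_supp k) => /[swap] ->.
have z_lowS (k : 'I_n) : k < n - 2 -> z k < n - 2.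
  move=> k_low; apply: contraNT (z_low k k_low) => /z_high zk.
  by rewrite -[X in _ == X](eqP (z_inv k)) zk.
have sl_low (k : 'I_n) : k < n - 2 -> sl k = k.
  by move=> k_low; apply: val_inj; rewrite /= sl_nat; do !case: eqP; lia.
have sl_high (k : 'I_n) :
    ~~ (k < n - 2) -> [/\ ~~ (sl k < n - 2), sl k != k & sl (sl k) = k].
  move=> k_high; have := ltn_ord k; rewrite -!(inj_eq val_inj) /= !sl_nat.
  by split; [|apply/eqP|apply: val_inj; rewrite /= !sl_nat]; do !case: eqP; lia.
apply/FPFP; split=> k; rewrite !permM; have [k_low|k_high] := boolP (k < n - 2).
- by rewrite sl_low // sl_low ?z_lowS // (eqP (z_inv k)).
- by have [slk_high _ slK] := sl_high k k_high; rewrite (z_high _ slk_high) slK z_high.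
- by rewrite sl_low // z_low.
- by have [slk_high slk _] := sl_high k k_high; rewrite z_high.
Qed.

End Fsub.

Section TwoPoints.
Variables (n : nat) (o0 o1 : 'I_n).
Hypotheses (o0_val : o0 = 0 :> nat) (o1_val : o1 = 1 :> nat).
Local Notation s01 := [:: o0; o1].

Lemma o0_neq_o1 : o0 != o1.
Proof. by rewrite -(inj_eq val_inj) /= o0_val o1_val. Qed.

Lemma uniq_s01 : uniq s01.
Proof. by rewrite /= inE o0_neq_o1. Qed.

Lemma notin_s01 (k : 'I_n) : (k \notin s01) = (1 < k).
Proof. by rewrite !inE -!(inj_eq val_inj) /= o0_val o1_val; case: (nat_of_ord k) => [|[]]. Qed.

Lemma sum_s01 (f : 'I_n -> nat) :
  \sum_k f k = f o0 + f o1 + \sum_(k | k \notin s01) f k.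
Proof. by rewrite (sum_split_seq _ uniq_s01) !big_cons big_nil addn0. Qed.

Lemma len_conjg_shift (J : 'I_n) (u g : 'S_n) : 0 < J ->
  u o0 = o1 -> u o1 = o0 -> g o0 = J -> g o1 = o0 ->
  (forall p q : 'I_n, 0 < p -> 0 < q -> (g p < g q) = (p < q)) ->
  len n (u ^ g)%g = len n u + 2 * (J - 1).
Proof.
move=> J_gt0 u0 u1 g0 g1 g_mono.
have u_out k : k \notin s01 -> u k \notin s01.
  by apply: perm_notin uniq_s01 _; rewrite /= u0 u1 !inE !eqxx orbT.
have count_lt (h : 'S_n) : (h o0 < J) + (h o1 < J) = 1 ->
    \sum_(k | k \notin s01) (h k < J : nat) = J - 1.
  by move=> h01; have := sum_perm_lt h (ltnW (ltn_ord J)); rewrite sum_s01; lia.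
have g_gt0 k : k != o1 -> 0 < g k.
  by rewrite lt0n -o0_val -g1 (inj_eq val_inj) (inj_eq (@perm_inj _ g)).
have gt0_out k : k \notin s01 -> 0 < k.
  by rewrite notin_s01; apply: ltn_trans.
have out_ne1 k : k \notin s01 -> k != o1.
  by rewrite !inE negb_or => /andP[].
have mixed_conj (k : 'I_n) : k \notin s01 ->
    \sum_(p <- s01)
      ((g p < g k) && (g (u k) < g (u p)) + (g k < g p) && (g (u p) < g (u k)))
    = (g k < J) + (g (u k) < J).
  move=> k_out; have := g_gt0 k (out_ne1 _ k_out).
  have := g_gt0 (u k) (out_ne1 _ (u_out _ k_out)).
  by rewrite !big_cons big_nil u0 u1 g0 g1 o0_val; lia.
have mixed (k : 'I_n) : k \notin s01 ->
    \sum_(p <- s01) ((p < k) && (u k < u p) + (k < p) && (u p < u k)) = 0.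
  move=> k_out; have := u_out _ k_out; have := k_out.
  by rewrite !notin_s01 !big_cons big_nil u0 u1 o0_val o1_val; lia.
have outer : \sum_(p : 'I_n | p \notin s01) \sum_(q : 'I_n | q \notin s01)
               ((g p < g q) && (g (u q) < g (u p)) : nat)
           = \sum_(p : 'I_n | p \notin s01) \sum_(q : 'I_n | q \notin s01)
               ((p < q) && (u q < u p) : nat).
  apply: eq_bigr => p p_out; apply: eq_bigr => q q_out.
  by rewrite !g_mono ?gt0_out ?u_out.
rewrite len_conjg len_sum !(sum2_split_seq _ uniq_s01) outer (eq_bigr _ mixed) big1_eq.
have count_lt_ug : \sum_(k | k \notin s01) (g (u k) < J : nat) = J - 1.
  rewrite -(count_lt (u * g)%g); last by rewrite !permM u0 u1 g0 g1 o0_val ltnn J_gt0.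
  by apply: eq_bigr => k _; rewrite permM.
rewrite (eq_bigr _ mixed_conj) big_split /= count_lt ?count_lt_ug; last first.
  by rewrite g0 g1 o0_val ltnn J_gt0.
rewrite !big_cons !big_nil u0 u1 g0 g1 o0_val o1_val ltnn ltn0 J_gt0 /=.
by rewrite !add0n !addn0 [RHS]addnAC; congr (_ + _); lia.
Qed.

Section Uncrossing.
Variables X Y : 'I_n.
Hypotheses (X_gt1 : 1 < X) (Y_gt1 : 1 < Y) (XY : X != Y).
Local Notation s4 := [:: o0; o1; X; Y].

Lemma uniq_s4 : uniq s4.
Proof.
rewrite /= !inE -!(inj_eq val_inj) /= o0_val o1_val.
by move: XY; rewrite -(inj_eq val_inj) /=; lia.
Qed.

Lemma notin_s4 (k : 'I_n) :
  k \notin s4 -> [/\ 1 < k, k != X :> nat & k != Y :> nat].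
Proof. by rewrite !inE -!(inj_eq val_inj) /= o0_val o1_val => k_out; split; lia. Qed.

Lemma len_uncross (u v : 'S_n) :
  u o0 = X -> u X = o0 -> u o1 = Y -> u Y = o1 ->
  v o0 = o1 -> v o1 = o0 -> v X = Y -> v Y = X ->
  (forall k, k \notin s4 -> v k = u k) -> len n v < len n u.
Proof.
move=> u0 uX u1 uY v0 v1 vX vY vu.
have u_out k : k \notin s4 -> u k \notin s4.
  by apply: perm_notin uniq_s4 _; rewrite /= u0 u1 uX uY !inE !eqxx !orbT.
have outer : \sum_(p : 'I_n | p \notin s4) \sum_(q : 'I_n | q \notin s4)
               ((p < q) && (v q < v p) : nat)
           = \sum_(p : 'I_n | p \notin s4) \sum_(q : 'I_n | q \notin s4)
               ((p < q) && (u q < u p) : nat).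
  by apply: eq_bigr => p p_out; apply: eq_bigr => q q_out; rewrite !vu.
have mixed : \sum_(k : 'I_n | k \notin s4) \sum_(p <- s4)
               ((p < k) && (v k < v p) + (k < p) && (v p < v k))
          <= \sum_(k : 'I_n | k \notin s4) \sum_(p <- s4)
               ((p < k) && (u k < u p) + (k < p) && (u p < u k)).
  apply: leq_sum => k k_out; rewrite vu //.
  have [k_gt1 kX kY] := notin_s4 k_out.
  have [uk_gt1 ukX ukY] := notin_s4 (u_out _ k_out).
  by rewrite !big_cons big_nil u0 u1 uX uY v0 v1 vX vY o0_val o1_val; lia.
have inside : \sum_(p <- s4) \sum_(q <- s4) ((p < q) && (v q < v p) : nat)
           < \sum_(p <- s4) \sum_(q <- s4) ((p < q) && (u q < u p) : nat).
  move: XY; rewrite -(inj_eq val_inj) /= => XY'.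
  by rewrite !big_cons !big_nil u0 u1 uX uY v0 v1 vX vY o0_val o1_val; lia.
rewrite !len_sum !(sum2_split_seq _ uniq_s4) outer ltn_add2r -addSn.
exact: leq_add.
Qed.

End Uncrossing.

Lemma tperm_conj_pair01 (a : 'S_n) (c d : 'I_n) :
  (forall i, a (a i) = i) -> a o0 != o1 -> (tperm c d * a * tperm c d)%g o0 = o1 ->
  tperm c d = tperm o1 (a o0) \/ tperm c d = tperm o0 (a o1).
Proof.
move=> a_inv a0 b0; have a1 : a o1 != o0 by apply: contra_neq a0 => <-; rewrite a_inv.
have : a (tperm c d o0) = tperm c d o1 by rewrite -b0 !permM tpermK.
case: tpermP => [<-|<-|_ _].
1,2: rewrite ?(tpermC _ o0); case: tpermP => [/eqP|<-|_ _ ad];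
  [ by rewrite eq_sym (negPf o0_neq_o1)
  | by move=> /eqP; rewrite (negPf a1)
  | by right; rewrite -ad a_inv ].
by case: tpermP => [<- ->|<- ->|_ _ /eqP]; [left|left; rewrite tpermC|rewrite (negPf a0)].
Qed.

Lemma bruhat_step_pair01 (a b : 'S_n) : bruhat_step n a b -> b o0 = o1 -> a o0 = o1.
Proof.
case/and3P => /FPFP [a_inv a_fpf] /existsP [c /existsP [d /andP [_ /eqP ->]]] len_ab b0.
apply/eqP; apply: contraTT len_ab => a0; rewrite -ltnNge.
have := tperm_conj_pair01 a_inv a0 b0; set t := tperm c d in b0 * => t_cases.
move eX : (a o0) a0 t_cases => X X1; move eY : (a o1) => Y t_cases.
have aX : a X = o0 by rewrite -eX a_inv.
have aY : a Y = o1 by rewrite -eY a_inv.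
have X0 : X != o0 by rewrite -eX a_fpf.
have Y1 : Y != o1 by rewrite -eY a_fpf.
have Y0 : Y != o0 by apply: contra_neq X1 => Y_0; rewrite -eX -Y_0 aY.
have XY : X != Y by rewrite -eX -eY (inj_eq (@perm_inj _ a)) o0_neq_o1.
have gt1 k : k != o0 -> k != o1 -> 1 < k.
  by move=> k0 k1; rewrite -notin_s01 !inE negb_or k0.
have v_inv k : (t * a * t)%g ((t * a * t)%g k) = k by rewrite !permM tpermK a_inv tpermK.
have v1 : (t * a * t)%g o1 = o0 by rewrite -b0 v_inv.
have v_out k : k \notin [:: o0; o1; X; Y] -> (t * a * t)%g k = a k.
  move=> k_out; have := perm_notin (u := a) (uniq_s4 (gt1 _ X0 X1) (gt1 _ Y0 Y1) XY) _ k_out.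
  rewrite /= eX eY aX aY !inE !eqxx !orbT => /(_ isT).
  move: k_out; rewrite !inE !negb_or => /and4P [k0 k1 kX kY] /and4P [ak0 ak1 akX akY].
  by case: t_cases => ->; rewrite !permM !tpermD // eq_sym.
have vX : (t * a * t)%g X = Y.
  case: t_cases => ->; rewrite !permM.
  - by rewrite tpermR eY tpermD // eq_sym.
  - by rewrite [tperm o0 Y X]tpermD 1?eq_sym // aX tpermL.
apply: (len_uncross (gt1 _ X0 X1) (gt1 _ Y0 Y1) XY eX aX eY aY b0 v1 vX) => //.
by rewrite -vX v_inv.
Qed.

Lemma Y1_FPF_pair u : u \in Y1 n -> u \in FPF n /\ u o0 = o1.
Proof.
case/imsetP => z z_Fsub ->; have n_gt1 : 1 < n by rewrite -o1_val ltn_ord.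
split.
  rewrite (_ : _ * _ = (s n n.-1 * z) ^ w0 n)%g; last by rewrite conjgE w0V !mulgA.
  exact/FPF_conjg/Fsub_sl_FPF.
have sl_w0 : s n n.-1 (w0 n o0) = n - 2 :> nat.
  by rewrite sl_nat // w0_nat o0_val; do !case: eqP; lia.
apply: val_inj; rewrite !permM /= w0_nat (Fsub_fix z_Fsub) ?sl_w0 ?ltnn //.
by rewrite o1_val; lia.
Qed.

Lemma len_conjg_sigma j (u : 'S_n) : 0 < j < n -> u \in FPF n -> u o0 = o1 ->
  len n (u ^ sigma n j)%g = len n u + 2 * (j - 1).
Proof.
case/andP => j_gt0 j_lt_n /FPFP [u_inv _] u0.
have u1 : u o1 = o0 by rewrite -u0 u_inv.
apply: (len_conjg_shift (J := Ordinal j_lt_n)) => //.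
- by apply: val_inj; rewrite /= sigma_nat // o0_val.
- by apply: val_inj; rewrite /= sigma_nat // o0_val o1_val j_gt0.
- by move=> p q p_gt0 q_gt0; rewrite !sigma_nat //; do !case: ifP; lia.
Qed.

Lemma bruhat_step_conjg_sigma j (w w' : 'S_n) : 0 < j < n ->
  bruhat_step n w w' -> w' o0 = o1 ->
  bruhat_step n (w ^ sigma n j)%g (w' ^ sigma n j)%g.
Proof.
move=> j_range step w'0; have w0 := bruhat_step_pair01 step w'0.
case/and3P: step => w_FPF /existsP [c /existsP [d /andP [cd /eqP w'E]]] len_ww'.
have w'_FPF : w' \in FPF n by rewrite w'E -{1}tpermV -mulgA -conjgE FPF_conjg.
apply/and3P; split; first exact: FPF_conjg.
  apply/existsP; exists (sigma n j c); apply/existsP; exists (sigma n j d).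
  by rewrite (inj_eq (@perm_inj _ _)) cd w'E !conjMg !tpermJ; apply/eqP.
by rewrite !len_conjg_sigma // leq_add2r.
Qed.

End TwoPoints.

Lemma connect_homo_backward (T U : finType) (e : rel T) (e' : rel U)
    (P : pred T) (f : T -> U) :
  (forall x y, e x y -> P y -> P x /\ e' (f x) (f y)) ->
  forall x y, connect e x y -> P y -> connect e' (f x) (f y).
Proof.
move=> step; suff path_homo p x : path e x p -> P (last x p) ->
    P x /\ connect e' (f x) (f (last x p)).
  by move=> x _ /connectP [p xp ->] Py; case: (path_homo p x xp Py).
elim: p x => [|z p IHp] x /=; first by split; last apply: connect0.
case/andP=> xz /IHp /[apply] -[Pz fz_fy]; have [Px fx_fz] := step x z xz Pz.
by split; last exact: connect_trans (connect1 fx_fz) fz_fy.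
Qed.

Unset Implicit Arguments.

Theorem proposition3p5 (n : nat) :
  (4 <= n)%N -> ~~ odd n ->
  forall j : nat, (1 <= j <= n - 1)%N ->
    [/\ {in Y1 n, forall x, nu n j x \in Y n j},
        {in Y1 n &, injective (nu n j)}
      & {in Y1 n &, forall x y, bruhat n x y -> bruhat n (nu n j x) (nu n j y)}].
Proof.
move=> n_ge4 _ j /andP [j_gt0 j_le]; have j_range : 0 < j < n by apply/andP; lia.
have n_gt0 : 0 < n by lia.
have n_gt1 : 1 < n by lia.
pose o0 := Ordinal n_gt0; have o0_val : o0 = 0 :> nat by [].
pose o1 := Ordinal n_gt1; have o1_val : o1 = 1 :> nat by [].
split.
- by move=> x x_Y1; apply: imset_f.
- by move=> x y _ _; apply: conjg_inj.
move=> x y _ /(Y1_FPF_pair o0_val o1_val) [_ y0]; rewrite /bruhat => xy.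
apply: (connect_homo_backward (P := fun w : 'S_n => w o0 == o1) _ xy); last exact/eqP.
move=> w w' step /eqP w'0; split.
  by apply/eqP; apply: bruhat_step_pair01 step w'0.
exact (bruhat_step_conjg_sigma o0_val o1_val j_range step w'0).
Qed.
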